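(* Let $r\ge 3$ and let $\mathcal H=(V,E)$ be an $r$-uniform bi-hypergraph. Suppose $V$ has a partition $V_1,\dots,V_r$ such that each $V_i$ ($i\in[r]$) is independent in $\mathcal H$, $V_r=\{w\}$ for a single vertex $w$, and for every edge $e\in E$ with $w\in e$ there is some $i\in[r-1]$ with $e\cap V_i=\emptyset$. Then $\mathcal H$ is colorable.
   Context: A bi-hypergraph $\mathcal H=(V,E)$ consists of a finite vertex set $V$ and a set $E$ of subsets of $V$, called edges, with no edge contained in another. It is $r$-uniform if every edge has exactly $r$ elements. A set $S\subseteq V$ is independent if no edge of $\mathcal H$ is contained in $S$. A mapping $f:V\to\mathbb N$ is a proper coloring of $\mathcal H$ if $1<|f(e)|<|e|$ for every $e\in E$, where $f(e)=\{f(v):v\in e\}$. $\mathcal H$ is colorable if it has a proper coloring. $[k]=\{1,\dots,k\}$. *)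

From mathcomp Require Import all_boot.
Set Implicit Arguments. Unset Strict Implicit. Unset Printing Implicit Defensive.

Definition bihypergraph (V : finType) (E : {set {set V}}) : Prop :=
  forall e1 e2, e1 \in E -> e2 \in E -> e1 \subset e2 -> e1 = e2.

Definition uniform (V : finType) (E : {set {set V}}) (r : nat) : Prop :=
  forall e, e \in E -> #|e| = r.

Definition independent (V : finType) (E : {set {set V}}) (S : {set V}) : Prop :=
  forall e, e \in E -> ~~ (e \subset S).

(* f is a proper coloring: 1 < |f(e)| < |e| for every edge e;
   |f(e)| = number of distinct values of f on e. *)
Definition proper_coloring (V : finType) (E : {set {set V}}) (f : V -> nat) : Prop :=
  forall e, e \in E -> 1 < size (undup [seq f x | x in e]) < #|e|.

Definition colorable (V : finType) (E : {set {set V}}) : Prop :=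
  exists f : V -> nat, proper_coloring E f.

From mathcomp Require Import all_boot.

Set Implicit Arguments.
Unset Strict Implicit.
Unset Printing Implicit Defensive.

(* Colour every vertex by (the index of) the block of the
   partition containing it.  On an edge e the number of colours used is the
   number of blocks met by e:
   - it is at least 2, because e has a vertex and is not contained in a
     single block (blocks are independent);
   - it is at most (number of blocks) - 1 = |e| - 1 as soon as e misses some
     block (the uniformity r equals the number of blocks).
   So block colouring is proper whenever every edge misses a block.  For the
   theorem, an edge through w misses some V_i by hypothesis, and an edge
   avoiding w misses V_r = {w}. *)

Lemma size_undup_colours (V I : finType) (g : V -> I) (h : I -> nat)
    (e : {set V}) :
  injective h -> size (undup [seq h (g x) | x in e]) = #|g @: e|.
Proof.
move=> h_inj; have -> : [seq h (g x) | x in e] = map h [seq g x | x in e].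
  by rewrite -map_comp.
rewrite undup_map_inj // size_map imset_card.
rewrite -(eq_card (mem_undup _)); symmetry; exact/card_uniqP/undup_uniq.
Qed.

Section BlockColouring.

Variables (V I : finType) (P : I -> {set V}).
Hypothesis P_partition : forall v : V, exists! i : I, v \in P i.

Lemma block_exists (v : V) : exists i : I, v \in P i.
Proof. by have [i [vPi _]] := P_partition v; exists i. Qed.

Definition block (v : V) : I := xchoose (block_exists v).

Lemma block_mem (v : V) : v \in P (block v).
Proof. exact: (xchooseP (block_exists v)). Qed.

Definition block_colour (v : V) : nat := enum_rank (block v).

Lemma block_colour_count (e : {set V}) :
  size (undup [seq block_colour x | x in e]) = #|block @: e|.
Proof.
apply: (@size_undup_colours V I block (fun i => enum_rank i)).
by move=> i j /val_inj/enum_rank_inj.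
Qed.

Variable E : {set {set V}}.
Hypothesis blocks_independent : forall i, independent E (P i).

(* A nonempty edge meets at least two blocks, since no block contains it. *)
Lemma edge_meets_two_blocks (e : {set V}) :
  e \in E -> e != set0 -> 1 < #|block @: e|.
Proof.
move=> eE /set0Pn [x xe]; rewrite ltnNge; apply/negP => /card_le1_eqP same_block.
have e_in_block : e \subset P (block x).
  apply/subsetP => y ye; rewrite (same_block (block y) (block x)) ?block_mem //.
  - exact: imset_f.
  - exact: imset_f.
by move/negP: (blocks_independent (block x) eE).
Qed.

Lemma edge_missing_block (e : {set V}) (j : I) :
  [disjoint e & P j] -> #|block @: e| < #|I|.
Proof.
move=> e_Pj; have sub : block @: e \subset [set~ j].
  apply/subsetP => _ /imsetP [y ye ->]; rewrite !inE; apply/eqP => yj.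
  by move: (block_mem y); rewrite yj (disjointFr e_Pj ye).
rewrite (leq_ltn_trans (subset_leq_card sub)) // cardsC1 ltn_predL.
by apply/card_gt0P; exists j.
Qed.

Lemma block_colouring_proper :
  uniform E #|I| ->
  (forall e, e \in E -> exists j : I, [disjoint e & P j]) ->
  proper_coloring E block_colour.
Proof.
move=> E_unif E_miss e eE; have [j e_Pj] := E_miss e eE.
have e_nonempty : e != set0.
  by rewrite -card_gt0 E_unif //; apply/card_gt0P; exists j.
rewrite block_colour_count E_unif // edge_meets_two_blocks //.
exact: edge_missing_block e_Pj.
Qed.

End BlockColouring.

Theorem mainTheorem7 (r : nat) (V : finType) (E : {set {set V}})
  (P : 'I_r.+1 -> {set V}) (w : V) :
  3 <= r.+1 ->
  bihypergraph E ->
  uniform E r.+1 ->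
  (forall v : V, exists! i : 'I_r.+1, v \in P i) ->
  (forall i, independent E (P i)) ->
  P ord_max = [set w] ->
  (forall e, e \in E -> w \in e ->
     exists i : 'I_r.+1, (i < r) /\ [disjoint e & P i]) ->
  colorable E.
Proof.
move=> _ _ E_unif P_partition P_indep P_last w_edges.
exists (block_colour P_partition); apply: block_colouring_proper => //.
  by rewrite card_ord.
move=> e eE; case: (boolP (w \in e)) => [we | wNe].
  by have [i [_ e_Pi]] := w_edges e eE we; exists i.
by exists ord_max; rewrite P_last disjoint_sym disjoints1.
Qed.
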